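(* Let $p(a,b\mid x_0,x_1,y,y')$ be a non-signalling racbox. Define a two-input, two-output box $q$ by fixing Alice's first input to $0$ and Bob's second input to $0$: $$q(a,b\mid x,y) := p(a,b\mid x_0=0,\ x_1=x,\ y,\ y'=0), \qquad x,y\in\{0,1\}.$$ Then $q$ is the PR-box, that is, for all $x,y,a,b\in\{0,1\}$, $$q(a,b\mid x,y)=\begin{cases}\tfrac12 & \text{if } a\oplus b = xy,\\ 0 & \text{otherwise.}\end{cases}$$
   Context: A box is a family of conditional probability distributions $p(a,b\mid x_0,x_1,y,y')$ with $a,b,x_0,x_1,y,y'\in\{0,1\}$. Alice holds inputs $x_0,x_1$ and output $a$; Bob holds inputs $y,y'$ and output $b$. A racbox is a box with two properties. First, it is non-signalling from Bob to Alice: $p(a\mid x_0,x_1,y,y')$ does not depend on $(y,y')$. Second, whenever $a=y'$ one has $b=x_y$ with certainty. A racbox is non-signalling if, in addition, Bob's marginal $p(b\mid x_0,x_1,y,y')$ does not depend on $(x_0,x_1)$. *)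

From Stdlib Require Import Reals Bool.
Open Scope R_scope.

(* A box p(a,b | x0,x1,y,y'), arguments in the order a b x0 x1 y y'. *)
Definition box6 := bool -> bool -> bool -> bool -> bool -> bool -> R.

Definition is_box (p : box6) : Prop :=
  (forall a b x0 x1 y y', 0 <= p a b x0 x1 y y') /\
  (forall x0 x1 y y',
     p false false x0 x1 y y' + p false true x0 x1 y y'
   + p true false x0 x1 y y' + p true true x0 x1 y y' = 1).

Definition margA (p : box6) (a x0 x1 y y' : bool) : R :=
  p a false x0 x1 y y' + p a true x0 x1 y y'.

Definition margB (p : box6) (b x0 x1 y y' : bool) : R :=
  p false b x0 x1 y y' + p true b x0 x1 y y'.

Definition sel (x0 x1 y : bool) : bool := if y then x1 else x0.

(* Racbox: non-signalling from Bob to Alice, and a = y' implies b = x_y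
   with certainty (i.e. outcomes with a = y' and b <> x_y have probability 0). *)
Definition is_racbox (p : box6) : Prop :=
  is_box p /\
  (forall a x0 x1 y y' z z', margA p a x0 x1 y y' = margA p a x0 x1 z z') /\
  (forall a b x0 x1 y y', a = y' -> b <> sel x0 x1 y -> p a b x0 x1 y y' = 0).

Definition is_ns_racbox (p : box6) : Prop :=
  is_racbox p /\
  (forall b x0 x1 w0 w1 y y', margB p b x0 x1 y y' = margB p b w0 w1 y y').

Definition q_of (p : box6) (a b x y : bool) : R := p a b false x y false.

Definition PR (a b x y : bool) : R :=
  if Bool.eqb (xorb a b) (andb x y) then 1/2 else 0.

From Stdlib Require Import Reals Bool Lra.
Open Scope R_scope.

(* In a racbox, whenever Alice outputs a = y', Bob outputs
   x_y; hence Bob's probability of outputting x_y is at least Alice's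
   probability of outputting y' (the "guessing bound").  In a
   non-signalling racbox Alice's marginal alpha(a | x0,x1) does not depend
   on (y,y') and Bob's marginal beta(b | y,y') does not depend on (x0,x1).
   Adding the guessing bounds for both values of y' and for two inputs with
   opposite x_y gives 2 <= 2, so every bound is an equality:
   alpha(y' | x0,x1) = beta(x_y | y,y').  Comparing y = 0 with y = 1 forces
   beta(0 | 0,0) = beta(1 | 0,0), so all marginals equal 1/2.  The entries
   of p are then determined: p(a,b | x0,x1,y,y') = 1/2 exactly when
   (a = y') <-> (b = x_y), and 0 otherwise.  The theorem is the special
   case x0 = y' = 0 of this characterization, where x_y = x /\ y. *)

Lemma margB_compl (p : box6) (b x0 x1 y y' : bool) :
  is_box p -> margB p b x0 x1 y y' + margB p (negb b) x0 x1 y y' = 1.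
Proof.
  intros [_ Hsum]; specialize (Hsum x0 x1 y y').
  destruct b; unfold margB; simpl; lra.
Qed.

Lemma margA_compl (p : box6) (a x0 x1 y y' : bool) :
  is_box p -> margA p a x0 x1 y y' + margA p (negb a) x0 x1 y y' = 1.
Proof.
  intros [_ Hsum]; specialize (Hsum x0 x1 y y').
  destruct a; unfold margA; simpl; lra.
Qed.

Lemma racbox_guess_bound (p : box6) (x0 x1 y y' : bool) :
  is_racbox p ->
  margA p y' x0 x1 y y' <= margB p (sel x0 x1 y) x0 x1 y y'.
Proof.
  intros [[Hpos _] [_ Hcert]].
  assert (Hwrong : p y' (negb (sel x0 x1 y)) x0 x1 y y' = 0).
  { apply Hcert; [reflexivity | destruct (sel x0 x1 y); discriminate]. }
  pose proof (Hpos (negb y') (sel x0 x1 y) x0 x1 y y') as Hother.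
  destruct y', (sel x0 x1 y); unfold margA, margB in *; simpl in *; lra.
Qed.

Lemma sel_flip (x0 x1 y : bool) :
  exists w0 w1, sel w0 w1 y = negb (sel x0 x1 y).
Proof. destruct y; [exists x0, (negb x1) | exists (negb x0), x1]; reflexivity. Qed.

Section NonSignallingRacbox.

Variable p : box6.
Hypothesis Hp : is_ns_racbox p.

Definition alpha (a x0 x1 : bool) : R := margA p a x0 x1 false false.

Definition beta (b y y' : bool) : R := margB p b false false y y'.

Let Hbox : is_box p := proj1 (proj1 Hp).

(* Non-signalling lets every marginal be read off at reference inputs. *)
Lemma margA_alpha (a x0 x1 y y' : bool) : margA p a x0 x1 y y' = alpha a x0 x1.
Proof. apply (proj1 (proj2 (proj1 Hp))). Qed.

Lemma margB_beta (b x0 x1 y y' : bool) : margB p b x0 x1 y y' = beta b y y'.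
Proof. apply (proj2 Hp). Qed.

Lemma alpha_le_beta (x0 x1 y y' : bool) : alpha y' x0 x1 <= beta (sel x0 x1 y) y y'.
Proof.
  rewrite <- (margA_alpha y' x0 x1 y y'), <- (margB_beta _ x0 x1 y y').
  exact (racbox_guess_bound p x0 x1 y y' (proj1 Hp)).
Qed.

(* The guessing bound is tight: summing it over y' and over two inputs with
   opposite x_y gives 2 <= 2. *)
Lemma alpha_eq_beta (x0 x1 y y' : bool) : alpha y' x0 x1 = beta (sel x0 x1 y) y y'.
Proof.
  destruct (sel_flip x0 x1 y) as [w0 [w1 Hw]].
  pose proof (alpha_le_beta x0 x1 y false) as H0.
  pose proof (alpha_le_beta x0 x1 y true) as H1.
  pose proof (alpha_le_beta w0 w1 y false) as H2.
  pose proof (alpha_le_beta w0 w1 y true) as H3.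
  rewrite Hw in H2, H3.
  pose proof (margA_compl p false x0 x1 false false Hbox) as Ax.
  pose proof (margA_compl p false w0 w1 false false Hbox) as Aw.
  pose proof (margB_compl p (sel x0 x1 y) false false y false Hbox) as B0.
  pose proof (margB_compl p (sel x0 x1 y) false false y true Hbox) as B1.
  unfold alpha, beta in *; simpl in *.
  destruct y'; lra.
Qed.

Lemma beta_half (b y y' : bool) : beta b y y' = 1/2.
Proof.
  assert (Hsym : beta false false y' = beta true false y').
  { (* both equal beta(0 | 1,y') through alpha(y' | x0, 0) for x0 = 0, 1 *)
    pose proof (alpha_eq_beta false false false y') as E00.
    pose proof (alpha_eq_beta false false true y') as E01.
    pose proof (alpha_eq_beta true false false y') as E10.
    pose proof (alpha_eq_beta true false true y') as E11.
    simpl in *; congruence. }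
  assert (Hhalf : forall c, beta c false y' = 1/2).
  { pose proof (margB_compl p false false false false y' Hbox) as Hc.
    unfold beta in *; simpl in *; destruct c; lra. }
  replace b with (sel b b y) by (destruct y; reflexivity).
  rewrite <- alpha_eq_beta, (alpha_eq_beta b b false y'); apply Hhalf.
Qed.

Lemma alpha_half (a x0 x1 : bool) : alpha a x0 x1 = 1/2.
Proof. rewrite (alpha_eq_beta x0 x1 false a); apply beta_half. Qed.

Lemma entry_guessed (b x0 x1 y y' : bool) :
  p y' b x0 x1 y y' = if Bool.eqb b (sel x0 x1 y) then 1/2 else 0.
Proof.
  (* The wrong answer has probability 0, so the right one carries all of
     Alice's marginal alpha(y' | x0,x1) = 1/2. *)
  assert (Hwrong : p y' (negb (sel x0 x1 y)) x0 x1 y y' = 0).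
  { apply (proj2 (proj2 (proj1 Hp))); [reflexivity | destruct (sel x0 x1 y); discriminate]. }
  pose proof (alpha_half y' x0 x1) as Ha; rewrite <- (margA_alpha _ _ _ y y') in Ha.
  unfold margA in Ha.
  destruct (sel x0 x1 y), b; simpl in *; lra.
Qed.

Lemma ns_racbox_entry (a b x0 x1 y y' : bool) :
  p a b x0 x1 y y' =
  if Bool.eqb (Bool.eqb a y') (Bool.eqb b (sel x0 x1 y)) then 1/2 else 0.
Proof.
  destruct (Bool.eqb a y') eqn:Hay.
  - apply eqb_prop in Hay; subst a.
    rewrite entry_guessed; destruct (Bool.eqb b (sel x0 x1 y)); reflexivity.
  - assert (Ha : a = negb y') by (destruct a, y'; simpl in *; congruence).
    pose proof (margB_beta b x0 x1 y y') as Hb; rewrite beta_half in Hb.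
    pose proof (entry_guessed b x0 x1 y y') as Hg.
    subst a; unfold margB in Hb.
    destruct y', (Bool.eqb b (sel x0 x1 y)); simpl in *; lra.
Qed.

End NonSignallingRacbox.

Theorem mainTheorem2 (p : box6) (Hp : is_ns_racbox p) :
  forall x y a b : bool, q_of p a b x y = PR a b x y.
Proof.
  intros x y a b; unfold q_of, PR.
  rewrite (ns_racbox_entry p Hp).
  (* With x0 = y' = 0 we have x_y = x && y, and (a = 0) <-> (b = xy)
     is exactly a xor b = xy. *)
  destruct x, y, a, b; reflexivity.
Qed.
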